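(* Let $A$ be an integer matrix with columns $a_1,\dots,a_r$ and $A'$ an integer matrix with columns $a'_1,\dots,a'_s$, and let $I_A\subseteq\mathbb{K}[x_1,\dots,x_r]$ and $I_{A'}\subseteq\mathbb{K}[y_1,\dots,y_s]$ be their toric ideals. Let $Q\subseteq[r]\times[s]$. Then $I_A\times_QI_{A'}$ is the toric ideal of the matrix $A\times_QA'$ whose columns are all vectors $(a_j,a'_k)^T$ with $(j,k)\in Q$ (the column indexed by $(j,k)$ corresponding to the variable $z_{jk}$).
   Context: The toric ideal of an integer matrix $A$ with columns $a_1,\dots,a_r$ is the kernel of the monomial map $x_j\mapsto t^{a_j}$ (Laurent monomial with exponent vector $a_j$). For $Q\subseteq[r]\times[s]$, $\phi_Q:\mathbb{K}[z_{jk}:(j,k)\in Q]\to\mathbb{K}[x,y]$ is $z_{jk}\mapsto x_jy_k$, and the quasi-independence gluing of ideals $I\subseteq\mathbb{K}[x]$, $J\subseteq\mathbb{K}[y]$ is $I\times_QJ:=\phi_Q^{-1}(I+J)$. *)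

From HB Require Import structures.
From mathcomp Require Import all_boot all_order all_algebra.
From mathcomp Require Import mpoly.
Set Implicit Arguments. Unset Strict Implicit. Unset Printing Implicit Defensive.
Import Order.TTheory GRing.Theory Num.Theory.
Local Open Scope ring_scope.

Definition mcol (n : nat) (m : 'X_{1..n}) : 'cV[int]_n := \col_j ((m j)%:Z).

(* Monomial map x_j |-> t^{a_j} (a_j = column j of A) into the Laurent
   polynomial ring K[t_1^{+-1},...,t_d^{+-1}], the latter represented as the
   group algebra K[Z^d], i.e. finitely supported functions Z^d -> K:
   the coefficient of t^b in the image of p. *)
Definition monomial_image (K : fieldType) (d n : nat) (A : 'M[int]_(d, n))
  (p : {mpoly K[n]}) (b : 'cV[int]_d) : K :=
  \sum_(m <- msupp p | A *m mcol m == b) p@_m.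

Definition toric_ideal (K : fieldType) (d n : nat) (A : 'M[int]_(d, n))
  (p : {mpoly K[n]}) : Prop :=
  forall b : 'cV[int]_d, monomial_image A p b = 0.

(* Inclusions K[x] -> K[x,y] and K[y] -> K[x,y], with K[x,y] = K[x_1..x_r,y_1..y_s]
   realised as {mpoly K[r + s]}: x_j = 'X_(lshift s j), y_k = 'X_(rshift r k). *)
Definition incl_x (K : fieldType) (r s : nat) (p : {mpoly K[r]}) : {mpoly K[r + s]} :=
  p \mPo [tuple 'X_(lshift s j) | j < r].
Definition incl_y (K : fieldType) (r s : nat) (p : {mpoly K[s]}) : {mpoly K[r + s]} :=
  p \mPo [tuple 'X_(rshift r k) | k < s].

Definition ideal_sum (K : fieldType) (r s : nat)
  (I : {mpoly K[r]} -> Prop) (J : {mpoly K[s]} -> Prop) (p : {mpoly K[r + s]}) : Prop :=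
  exists (n1 n2 : nat) (f : 'I_n1 -> {mpoly K[r]}) (g : 'I_n1 -> {mpoly K[r + s]})
         (e : 'I_n2 -> {mpoly K[s]}) (h : 'I_n2 -> {mpoly K[r + s]}),
    (forall i, I (f i)) /\ (forall i, J (e i)) /\
    p = \sum_(i < n1) g i * incl_x s (f i) + \sum_(i < n2) h i * incl_y r (e i).

(* The variables z_{jk}, (j,k) \in Q, are indexed by 'I_#|Q| via enum_val. *)
Definition phiQ (K : fieldType) (r s : nat) (Q : {set 'I_r * 'I_s})
  (p : {mpoly K[#|Q|]}) : {mpoly K[r + s]} :=
  p \mPo [tuple 'X_(lshift s (enum_val q).1) * 'X_(rshift r (enum_val q).2) | q < #|Q|].

(* Quasi-independence gluing I \times_Q J := phi_Q^{-1}(I + J). *)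
Definition qi_glue (K : fieldType) (r s : nat)
  (I : {mpoly K[r]} -> Prop) (Q : {set 'I_r * 'I_s}) (J : {mpoly K[s]} -> Prop)
  (p : {mpoly K[#|Q|]}) : Prop :=
  ideal_sum I J (@phiQ K r s Q p).

Definition glue_mx (d d' r s : nat) (A : 'M[int]_(d, r)) (Q : {set 'I_r * 'I_s})
  (A' : 'M[int]_(d', s)) : 'M[int]_(d + d', #|Q|) :=
  col_mx (\matrix_(i < d, q < #|Q|) A i (enum_val q).1)
         (\matrix_(i < d', q < #|Q|) A' i (enum_val q).2).

(* phi_Q is a monomial map, and composing it with the monomial map of the
   block-diagonal matrix diag(A, A') gives the monomial map of A x_Q A'.  So it
   suffices to show I_A + I_A' = I_diag(A,A') in K[x, y].  The inclusion from
   left to right holds because I_diag(A,A') is an ideal containing I_A and I_A'.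
   Conversely, split f in I_diag(A,A') into its parts f_b' whose monomials
   x^u y^v all have A'-degree A' v = b'; each f_b' again lies in I_diag(A,A').
   Fixing one monomial y^v0 of that degree,
     f_b' = (sum c x^u) y^v0 + sum c x^u (y^v - y^v0),
   where sum c x^u lies in I_A and every binomial y^v - y^v0 lies in I_A'. *)

From HB Require Import structures.
From mathcomp Require Import all_boot all_order all_algebra.
From mathcomp Require Import mpoly.

Set Implicit Arguments.
Unset Strict Implicit.
Unset Printing Implicit Defensive.

Import GRing.Theory.
Local Open Scope ring_scope.

Lemma col_mx_eqE (V : zmodType) m1 m2 n (a c : 'M[V]_(m1, n)) (b e : 'M[V]_(m2, n)) :
  (col_mx a b == col_mx c e) = (a == c) && (b == e).
Proof. by rewrite -subr_eq0 opp_col_mx add_col_mx col_mx_eq0 !subr_eq0. Qed.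

Lemma big_seq_partition (I J : eqType) (V : nmodType) (t : seq I) (f : I -> J)
    (F : I -> V) :
  \sum_(i <- t) F i = \sum_(j <- undup (map f t)) \sum_(i <- t | f i == j) F i.
Proof.
transitivity (\sum_(i <- t) \sum_(j <- undup (map f t) | f i == j) F i).
  rewrite big_seq [RHS]big_seq; apply: eq_bigr => i t_i.
  rewrite -big_filter (eq_filter (a2 := pred1 (f i))) => [|j]; last exact: eq_sym.
  by rewrite filter_pred1_uniq ?undup_uniq ?mem_undup ?map_f // big_seq1.
by rewrite (exchange_big_dep predT).
Qed.

Definition ord_cat (T : Type) (n1 n2 : nat) (F : 'I_n1 -> T) (G : 'I_n2 -> T)
  (i : 'I_(n1 + n2)) : T :=
  match split i with inl a => F a | inr b => G b end.

Lemma big_ord_cat2 (V : nmodType) (T T' : Type) (H : T -> T' -> V) n1 n2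
    (F : 'I_n1 -> T) (F' : 'I_n2 -> T) (G : 'I_n1 -> T') (G' : 'I_n2 -> T') :
  \sum_(i < n1 + n2) H (ord_cat F F' i) (ord_cat G G' i) =
  \sum_(i < n1) H (F i) (G i) + \sum_(i < n2) H (F' i) (G' i).
Proof.
rewrite big_split_ord; congr (_ + _); apply: eq_bigr => i _.
  by rewrite /ord_cat (unsplitK (inl _ i)).
by rewrite /ord_cat (unsplitK (inr _ i)).
Qed.

Lemma mcolD n (m1 m2 : 'X_{1..n}) : mcol (m1 + m2)%MM = mcol m1 + mcol m2.
Proof. by apply/matrixP => i j; rewrite !mxE mnmDE PoszD. Qed.

Lemma mcol_inj n : injective (@mcol n).
Proof.
by move=> m1 m2 /matrixP E; apply/mnmP => i; have := E i 0; rewrite !mxE => -[].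
Qed.

Section Weigh.
Variables (K : fieldType) (n : nat) (w : 'X_{1..n} -> K).

Definition mweigh (p : {mpoly K[n]}) : K := \sum_(m <- msupp p) p@_m * w m.

Lemma mweigh_on (s : seq 'X_{1..n}) p : uniq s -> {subset msupp p <= s} ->
  mweigh p = \sum_(m <- s) p@_m * w m.
Proof.
move=> s_uniq supp_s; rewrite (bigID (mem (msupp p))) /= [X in _ + X]big1 ?addr0.
  rewrite -big_filter; apply/perm_big/uniq_perm; rewrite ?filter_uniq ?msupp_uniq //.
  by move=> m; rewrite mem_filter andb_idr // => /supp_s.
by move=> m /memN_msupp_eq0 ->; rewrite mul0r.
Qed.

Lemma mweigh_is_linear : linear_for *%R mweigh.
Proof.
move=> c p q; set s := undup (msupp p ++ msupp q).
have sub_s (u : {mpoly K[n]}) : {subset msupp u <= msupp p ++ msupp q} ->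
    mweigh u = \sum_(m <- s) u@_m * w m.
  move=> supp_u; apply: mweigh_on; rewrite ?undup_uniq // => m /supp_u.
  by rewrite mem_undup.
rewrite (sub_s p) ?(sub_s q) ?(sub_s (c *: p + q)) => [|m|m|m]; last 3 first.
- by move/msuppD_le; rewrite !mem_cat => /orP[/msuppZ_le ->|->]; rewrite ?orbT.
- by rewrite mem_cat => ->; rewrite orbT.
- by rewrite mem_cat => ->.
rewrite mulr_sumr -big_split; apply: eq_bigr => m _.
by rewrite mcoeffD mcoeffZ mulrDl mulrA.
Qed.

HB.instance Definition _ :=
  GRing.isLinear.Build K {mpoly K[n]} K *%R mweigh mweigh_is_linear.

Lemma mweighX m : mweigh 'X_[m] = w m.
Proof. by rewrite /mweigh msuppX big_seq1 mcoeffX eqxx mul1r. Qed.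

End Weigh.

Lemma eq_mweigh (K : fieldType) n (w1 w2 : 'X_{1..n} -> K) :
  w1 =1 w2 -> mweigh w1 =1 mweigh w2.
Proof. by move=> w12 p; apply: eq_bigr => m _; rewrite w12. Qed.

Section MonomialSubstitution.
Variables (k n : nat) (F : 'I_n -> 'X_{1..k}).

Definition msubst (m : 'X_{1..n}) : 'X_{1..k} := (\sum_(j < n) F j *+ m j)%MM.

Definition exponent_mx : 'M[int]_(k, n) := \matrix_(i, j) (F j i)%:Z.

Lemma mcol_msubst m : mcol (msubst m) = exponent_mx *m mcol m.
Proof.
apply/matrixP => i z; rewrite !mxE mnm_sumE (big_morph Posz PoszD (erefl _)).
by apply: eq_bigr => j _; rewrite !mxE mulmnE PoszM.
Qed.

Variable K : fieldType.

Lemma comp_mpoly_monomials (p : {mpoly K[n]}) :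
  p \mPo [tuple 'X_[F j] | j < n] = \sum_(m <- msupp p) p@_m *: 'X_[msubst m].
Proof.
rewrite comp_mpolyE; apply: eq_bigr => m _; rewrite -mprodXnE.
by congr (_ *: _); apply: eq_bigr => j _; rewrite tnth_mktuple.
Qed.

Lemma mweigh_comp (w : 'X_{1..k} -> K) p :
  mweigh w (p \mPo [tuple 'X_[F j] | j < n]) = mweigh (w \o msubst) p.
Proof.
rewrite comp_mpoly_monomials raddf_sum; apply: eq_bigr => m _.
by rewrite /= linearZ /= mweighX.
Qed.

End MonomialSubstitution.

Section ToricIdeal.
Variables (K : fieldType) (d n : nat) (B : 'M[int]_(d, n)).
Implicit Types (p q g : {mpoly K[n]}).

Lemma monomial_imageE p b :
  monomial_image B p b = mweigh (fun m => (B *m mcol m == b)%:R) p.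
Proof.
rewrite /monomial_image /mweigh big_mkcond; apply: eq_bigr => m _.
by case: eqP; rewrite ?mulr1 ?mulr0.
Qed.

Lemma monomial_image_mulX u p b :
  monomial_image B ('X_[u] * p) b = monomial_image B p (b - B *m mcol u).
Proof.
rewrite {1}(mpolyE p) mulr_sumr !monomial_imageE raddf_sum; apply: eq_bigr => m _.
rewrite -scalerAr -mpolyXD /= linearZ /= mweighX mcolD mulmxDr.
by rewrite [_ == b - _]eq_sym subr_eq addrC [b == _]eq_sym.
Qed.

Lemma toric_idealD p q : toric_ideal B p -> toric_ideal B q -> toric_ideal B (p + q).
Proof.
by move=> Ip Iq b; rewrite monomial_imageE raddfD /= -!monomial_imageE Ip Iq addr0.
Qed.

Lemma toric_ideal_sum (I : Type) (t : seq I) (P : pred I) (F : I -> {mpoly K[n]}) :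
  (forall i, P i -> toric_ideal B (F i)) -> toric_ideal B (\sum_(i <- t | P i) F i).
Proof.
move=> IF b; rewrite monomial_imageE raddf_sum big1 // => i Pi.
by rewrite /= -monomial_imageE IF.
Qed.

Lemma toric_idealMl g p : toric_ideal B p -> toric_ideal B (g * p).
Proof.
move=> Ip b; rewrite (mpolyE g) mulr_suml monomial_imageE raddf_sum big1 // => u _.
by rewrite -scalerAl /= linearZ /= -monomial_imageE monomial_image_mulX Ip mulr0.
Qed.

Lemma toric_binomial u v :
  B *m mcol u = B *m mcol v -> toric_ideal B ('X_[u] - 'X_[v] : {mpoly K[n]}).
Proof. by move=> Buv b; rewrite monomial_imageE raddfB /= !mweighX Buv subrr. Qed.

End ToricIdeal.

Lemma toric_ideal_comp (K : fieldType) (d n k : nat) (B : 'M[int]_(d, n))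
    (F : 'I_k -> 'X_{1..n}) (p : {mpoly K[k]}) :
  toric_ideal B (p \mPo [tuple 'X_[F j] | j < k]) <-> toric_ideal (B *m exponent_mx F) p.
Proof.
have image_comp b : monomial_image B (p \mPo [tuple 'X_[F j] | j < k]) b =
    monomial_image (B *m exponent_mx F) p b.
  rewrite monomial_imageE mweigh_comp monomial_imageE; apply: eq_bigr => m _.
  by rewrite /= mcol_msubst mulmxA.
by split=> Ip b; [rewrite -image_comp | rewrite image_comp].
Qed.

Section StackZero.
Variables (K : fieldType) (d d' n : nat) (A : 'M[int]_(d, n)).

Lemma toric_ideal_col_mx0 (f : {mpoly K[n]}) :
  toric_ideal A f -> toric_ideal (col_mx A (0 : 'M_(d', n))) f.
Proof.
move=> If b; rewrite -(vsubmxK b) !monomial_imageE.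
have [-> | nz_b] := eqVneq (dsubmx b) 0.
  rewrite -(If (usubmx b)) monomial_imageE; apply: eq_mweigh => m.
  by rewrite mul_col_mx mul0mx col_mx_eqE eqxx andbT.
rewrite (@eq_mweigh _ _ _ (fun _ => 0)) => [|m]; last first.
  by rewrite mul_col_mx mul0mx col_mx_eqE [0 == _]eq_sym (negbTE nz_b) andbF.
by rewrite /mweigh big1 // => m _; rewrite mulr0.
Qed.

Lemma toric_ideal_col_0mx (f : {mpoly K[n]}) :
  toric_ideal A f -> toric_ideal (col_mx (0 : 'M_(d', n)) A) f.
Proof.
move=> If b; rewrite -(vsubmxK b) !monomial_imageE.
have [-> | nz_b] := eqVneq (usubmx b) 0.
  rewrite -(If (dsubmx b)) monomial_imageE; apply: eq_mweigh => m.
  by rewrite mul_col_mx mul0mx col_mx_eqE eqxx.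
rewrite (@eq_mweigh _ _ _ (fun _ => 0)) => [|m]; last first.
  by rewrite mul_col_mx mul0mx col_mx_eqE [0 == _]eq_sym (negbTE nz_b).
by rewrite /mweigh big1 // => m _; rewrite mulr0.
Qed.

End StackZero.

Section IdealSum.
Variables (K : fieldType) (r s : nat).
Variables (I : {mpoly K[r]} -> Prop) (J : {mpoly K[s]} -> Prop).
Implicit Types (p q g : {mpoly K[r + s]}).

Lemma ideal_sum0 : ideal_sum I J 0.
Proof.
exists 0%N, 0%N, (fun _ => 0), (fun _ => 0), (fun _ => 0), (fun _ => 0).
by split; [case | split; [case | rewrite !big_ord0 addr0]].
Qed.

Lemma ideal_sumD p q : ideal_sum I J p -> ideal_sum I J q -> ideal_sum I J (p + q).
Proof.
move=> [n1 [n2 [f [g [e [h [If [Je ->]]]]]]]].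
move=> [n1' [n2' [f' [g' [e' [h' [If' [Je' ->]]]]]]]].
exists (n1 + n1')%N, (n2 + n2')%N.
exists (ord_cat f f'), (ord_cat g g'), (ord_cat e e'), (ord_cat h h').
split; first by move=> i; rewrite /ord_cat; case: split.
split; first by move=> i; rewrite /ord_cat; case: split.
rewrite (big_ord_cat2 (fun g f => g * incl_x s f)).
by rewrite (big_ord_cat2 (fun h e => h * incl_y r e)) addrACA.
Qed.

Lemma ideal_sum_sum (T : Type) (t : seq T) (P : pred T) (F : T -> {mpoly K[r + s]}) :
  (forall i, P i -> ideal_sum I J (F i)) -> ideal_sum I J (\sum_(i <- t | P i) F i).
Proof. by move=> IJF; apply: big_ind; [exact: ideal_sum0 | exact: ideal_sumD |]. Qed.

Lemma ideal_sum_mulx g f : I f -> ideal_sum I J (g * incl_x s f).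
Proof.
move=> If; exists 1%N, 0%N, (fun _ => f), (fun _ => g), (fun _ => 0), (fun _ => 0).
by split=> //; split; [case | rewrite big_ord1 big_ord0 addr0].
Qed.

Lemma ideal_sum_muly g e : J e -> ideal_sum I J (g * incl_y r e).
Proof.
move=> Je; exists 0%N, 1%N, (fun _ => 0), (fun _ => 0), (fun _ => e), (fun _ => g).
by split; [case | split=> //; rewrite big_ord1 big_ord0 add0r].
Qed.

End IdealSum.

Section MonomialSplit.
Variables (r s : nat).
Implicit Types (m : 'X_{1..r + s}).

Definition mnm_left m : 'X_{1..r} := [multinom m (lshift s j) | j < r].
Definition mnm_right m : 'X_{1..s} := [multinom m (rshift r k) | k < s].

Local Notation Ux := (fun j : 'I_r => U_(lshift s j)%MM).
Local Notation Uy := (fun k : 'I_s => U_(rshift r k)%MM).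

Lemma mcol_split m : mcol m = col_mx (mcol (mnm_left m)) (mcol (mnm_right m)).
Proof.
apply/matrixP => i j; case: (split_ordP i) => k ->.
  by rewrite col_mxEu !mxE mnmE.
by rewrite col_mxEd !mxE mnmE.
Qed.

Lemma exponent_mx_lshift : exponent_mx Ux = col_mx 1%:M 0.
Proof.
apply/matrixP => i j; case: (split_ordP i) => k ->.
  by rewrite col_mxEu !mxE mnm1E eq_lshift eq_sym natz.
by rewrite col_mxEd !mxE mnm1E eq_lrshift.
Qed.

Lemma exponent_mx_rshift : exponent_mx Uy = col_mx 0 1%:M.
Proof.
apply/matrixP => i j; case: (split_ordP i) => k ->.
  by rewrite col_mxEu !mxE mnm1E eq_rlshift.
by rewrite col_mxEd !mxE mnm1E eq_rshift eq_sym natz.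
Qed.

Lemma msubst_split m : (msubst Ux (mnm_left m) + msubst Uy (mnm_right m))%MM = m.
Proof.
apply: mcol_inj; rewrite mcolD !mcol_msubst exponent_mx_lshift exponent_mx_rshift.
by rewrite !mul_col_mx !mul1mx !mul0mx add_col_mx addr0 add0r -mcol_split.
Qed.

Variable K : fieldType.

Lemma incl_xX u : incl_x s ('X_[u] : {mpoly K[r]}) = 'X_[msubst Ux u].
Proof. by rewrite /incl_x comp_mpoly_monomials msuppX big_seq1 mcoeffX eqxx scale1r. Qed.

Lemma incl_yX u : incl_y r ('X_[u] : {mpoly K[s]}) = 'X_[msubst Uy u].
Proof. by rewrite /incl_y comp_mpoly_monomials msuppX big_seq1 mcoeffX eqxx scale1r. Qed.

Lemma mpolyX_split m :
  'X_[m] = incl_x s 'X_[mnm_left m] * incl_y r 'X_[mnm_right m] :> {mpoly K[r + s]}.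
Proof. by rewrite incl_xX incl_yX -mpolyXD msubst_split. Qed.

End MonomialSplit.

Section BlockDiagonal.
Variables (K : fieldType) (d d' r s : nat) (A : 'M[int]_(d, r)) (A' : 'M[int]_(d', s)).
Implicit Types (q : {mpoly K[r + s]}).

Local Notation IA := (@toric_ideal K d r A).
Local Notation IA' := (@toric_ideal K d' s A').
Local Notation AA' := (block_mx A 0 0 A').

Lemma toric_incl_x f : IA f -> toric_ideal AA' (incl_x s f).
Proof.
move=> If; apply/toric_ideal_comp; rewrite exponent_mx_lshift mul_block_col.
by rewrite !mulmx1 !mulmx0 addr0 add0r; apply: toric_ideal_col_mx0.
Qed.

Lemma toric_incl_y e : IA' e -> toric_ideal AA' (incl_y r e).
Proof.
move=> Ie; apply/toric_ideal_comp; rewrite exponent_mx_rshift mul_block_col.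
by rewrite !mulmx1 !mulmx0 addr0 add0r; apply: toric_ideal_col_0mx.
Qed.

Lemma toric_block_of_ideal_sum q : ideal_sum IA IA' q -> toric_ideal AA' q.
Proof.
move=> [n1 [n2 [f [g [e [h [If [Ie ->]]]]]]]].
apply: toric_idealD; apply: toric_ideal_sum => i _; apply: toric_idealMl.
  exact: toric_incl_x.
exact: toric_incl_y.
Qed.

Local Notation ydeg m := (A' *m mcol (mnm_right m)).

Lemma monomial_image_block q b b' :
  monomial_image AA' q (col_mx b b') =
  \sum_(m <- msupp q | ydeg m == b') q@_m * (A *m mcol (mnm_left m) == b)%:R.
Proof.
rewrite /monomial_image big_mkcond [RHS]big_mkcond; apply: eq_bigr => m _.
rewrite mcol_split mul_block_col !mul0mx addr0 add0r col_mx_eqE.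
by case: (_ == b); case: (_ == b'); rewrite ?mulr1 ?mulr0.
Qed.

Lemma ideal_sum_toric_fibre q b' : toric_ideal AA' q ->
  ideal_sum IA IA' (\sum_(m <- msupp q | ydeg m == b') q@_m *: 'X_[m]).
Proof.
move=> Iq; have [|no_fibre] := boolP (has (fun m => ydeg m == b') (msupp q)); last first.
  rewrite big_seq_cond big1 => [|m /andP[m_q ydeg_m]]; first exact: ideal_sum0.
  by have := hasPn no_fibre m m_q; rewrite ydeg_m.
case/hasP=> m0 _ /eqP ydeg_m0.
set y0 : {mpoly K[r + s]} := incl_y r 'X_[mnm_right m0].
have split_term m : ydeg m == b' -> q@_m *: 'X_[m] =
    incl_x s (q@_m *: 'X_[mnm_left m]) * y0 +
    (q@_m *: incl_x s 'X_[mnm_left m]) * incl_y r ('X_[mnm_right m] - 'X_[mnm_right m0]).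
  rewrite /y0 mpolyX_split /incl_x /incl_y comp_mpolyZ comp_mpolyB.
  by rewrite mulrBr !scalerAl addrC subrK.
rewrite (eq_bigr _ split_term) big_split /=; apply: ideal_sumD.
  rewrite -big_distrl /= -raddf_sum mulrC; apply: ideal_sum_mulx => b.
  rewrite -(Iq (col_mx b b')) monomial_image_block monomial_imageE raddf_sum.
  by apply: eq_bigr => m _; rewrite /= linearZ /= mweighX.
apply: ideal_sum_sum => m /eqP ydeg_m; apply: ideal_sum_muly; apply: toric_binomial.
by rewrite ydeg_m ydeg_m0.
Qed.

Lemma ideal_sum_of_toric_block q : toric_ideal AA' q -> ideal_sum IA IA' q.
Proof.
move=> Iq; rewrite (mpolyE q) (big_seq_partition _ (fun m => ydeg m)).
by apply: ideal_sum_sum => b' _; apply: ideal_sum_toric_fibre.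
Qed.

Lemma ideal_sum_toric_block q : ideal_sum IA IA' q <-> toric_ideal AA' q.
Proof. by split; [apply: toric_block_of_ideal_sum | apply: ideal_sum_of_toric_block]. Qed.

End BlockDiagonal.

Section Gluing.
Variables (d d' r s : nat) (A : 'M[int]_(d, r)) (A' : 'M[int]_(d', s)).
Variable Q : {set 'I_r * 'I_s}.

Definition glue_exponent (q : 'I_#|Q|) : 'X_{1..r + s} :=
  (U_(lshift s (enum_val q).1) + U_(rshift r (enum_val q).2))%MM.

Lemma phiQE (K : fieldType) (p : {mpoly K[#|Q|]}) :
  phiQ p = p \mPo [tuple 'X_[glue_exponent q] | q < #|Q|].
Proof. by congr comp_mpoly; apply: eq_mktuple => q; rewrite mpolyXD. Qed.

Lemma exponent_mx_glue :
  exponent_mx glue_exponent =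
  col_mx (colsub (fun q => (enum_val q).1) 1%:M) (colsub (fun q => (enum_val q).2) 1%:M).
Proof.
apply/matrixP => i q; case: (split_ordP i) => k ->.
  by rewrite col_mxEu !mxE mnmDE !mnm1E eq_lshift eq_rlshift addn0 eq_sym natz.
by rewrite col_mxEd !mxE mnmDE !mnm1E eq_rshift eq_lrshift add0n eq_sym natz.
Qed.

Lemma glue_mxE : glue_mx A Q A' = block_mx A 0 0 A' *m exponent_mx glue_exponent.
Proof.
by rewrite exponent_mx_glue mul_block_col !mul0mx addr0 add0r !mulmx_colsub !mulmx1.
Qed.

End Gluing.

Theorem corollary3p11 (K : fieldType) (d d' r s : nat)
  (A : 'M[int]_(d, r)) (A' : 'M[int]_(d', s)) (Q : {set 'I_r * 'I_s})
  (p : {mpoly K[#|Q|]}) :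
  @qi_glue K r s (@toric_ideal K d r A) Q (@toric_ideal K d' s A') p <->
  @toric_ideal K (d + d') #|Q| (glue_mx A Q A') p.
Proof.
rewrite /qi_glue phiQE glue_mxE.
exact: iff_trans (ideal_sum_toric_block _ _ _) (toric_ideal_comp _ _ _).
Qed.
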